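(* Let $\rho^s$ be a qubit state on $\mathbb{C}^2$ with $l_1$-norm coherence $\mathcal{C}_{l_1}(\rho^s)>\sqrt{1/2}$, and let $A$, $B$ be auxiliary qubits each prepared in $|0\rangle\langle 0|$. Then there exists an incoherent operation $\Lambda$ on $(\mathbb{C}^2)^{\otimes 3}$ such that $\Lambda(\rho^s\otimes|0\rangle\langle 0|^A\otimes|0\rangle\langle 0|^B)$ is a genuinely three-qubit nonlocal state.
   Context: Coherence is with respect to the computational basis; $\mathcal{C}_{l_1}(\rho)=\sum_{i\neq j}|\rho_{ij}|$. An incoherent operation is a completely positive trace-preserving map $\Lambda(\rho)=\sum_j K_j\rho K_j^\dagger$ whose Kraus operators map states diagonal in the computational basis to (unnormalized) diagonal states. For measurements $X,Y,Z$ by three parties with outcomes $x,y,z$, the correlations are Svetlichny local if $P(xyz|XYZ)=\sum_\lambda q_\lambda P_\lambda(xy|XY)P_\lambda(z|Z)+\sum_\mu q_\mu P_\mu(xz|XZ)P_\mu(y|Y)+\sum_\nu q_\nu P_\nu(yz|YZ)P_\nu(x|X)$ with $q_\lambda,q_\mu,q_\nu\geq 0$ summing to $1$. A three-qubit state is genuinely three-qubit nonlocal if for some choice of local measurements its correlations are not Svetlichny local. *)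

From HB Require Import structures.
From mathcomp Require Import all_boot all_order all_algebra.
From mathcomp Require Import reals.
From mathcomp.real_closed Require Import complex mxtens.
Set Implicit Arguments. Unset Strict Implicit. Unset Printing Implicit Defensive.
Import Order.TTheory GRing.Theory Num.Theory.
Local Open Scope ring_scope.
Local Open Scope complex_scope.

Section Quantum.
Variable R : realType.
Local Notation C := (complex R).

Definition adjmx {m n} (A : 'M[C]_(m, n)) : 'M[C]_(n, m) := (map_mx Num.conj A)^T.

(* positive semidefinite: <v, A v> is a nonnegative real for every vector v
   (in C = R[i], 0 <= z means z is real and nonnegative) *)
Definition psdmx {n} (A : 'M[C]_n) : Prop :=
  forall v : 'cV[C]_n, 0 <= (adjmx v *m A *m v) 0 0.

Definition density {n} (rho : 'M[C]_n) : Prop := psdmx rho /\ \tr rho = 1.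

Definition coh_l1 {n} (rho : 'M[C]_n) : C :=
  \sum_(i < n) \sum_(j < n | i != j) `|rho i j|.

Definition kraus_apply {n} (Ks : seq 'M[C]_n) (rho : 'M[C]_n) : 'M[C]_n :=
  \sum_(K <- Ks) (K *m rho *m adjmx K).

Definition kraus_tp {n} (Ks : seq 'M[C]_n) : Prop :=
  \sum_(K <- Ks) (adjmx K *m K) = 1%:M.

Definition incoherent_op {n} (Ks : seq 'M[C]_n) : Prop :=
  kraus_tp Ks /\
  forall K, K \in Ks -> forall rho : 'M[C]_n, density rho -> is_diag_mx rho ->
    is_diag_mx (K *m rho *m adjmx K).

Definition qubit_povm (m o : nat) (E : 'I_m -> 'I_o -> 'M[C]_2) : Prop :=
  forall s, (forall x, psdmx (E s x)) /\ \sum_(x < o) E s x = 1%:M.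

Notation M3 := ('M[C]_(2 * 2 * 2)).

Definition qcorr (rho : M3) mX mY mZ oX oY oZ
  (E : 'I_mX -> 'I_oX -> 'M[C]_2) (F : 'I_mY -> 'I_oY -> 'M[C]_2)
  (G : 'I_mZ -> 'I_oZ -> 'M[C]_2) X Y Z x y z : C :=
  \tr (rho *m ((E X x *t F Y y) *t G Z z)).

Definition cond_dist2 (mA mB oA oB : nat) (P : 'I_mA -> 'I_mB -> 'I_oA -> 'I_oB -> R) :=
  forall a b, (forall x y, 0 <= P a b x y) /\ \sum_(x < oA) \sum_(y < oB) P a b x y = 1.
Definition cond_dist1 (mA oA : nat) (P : 'I_mA -> 'I_oA -> R) :=
  forall a, (forall x, 0 <= P a x) /\ \sum_(x < oA) P a x = 1.

(* Svetlichny-local correlations (hidden variables ranging over finite sets,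
   which is no loss of generality: the Svetlichny-local set is a polytope) *)
Definition svetlichny_local mX mY mZ oX oY oZ
  (P : 'I_mX -> 'I_mY -> 'I_mZ -> 'I_oX -> 'I_oY -> 'I_oZ -> R) : Prop :=
  exists (nl nm nn : nat) (ql : 'I_nl -> R) (qm : 'I_nm -> R) (qn : 'I_nn -> R)
    (Pl2 : 'I_nl -> 'I_mX -> 'I_mY -> 'I_oX -> 'I_oY -> R) (Pl1 : 'I_nl -> 'I_mZ -> 'I_oZ -> R)
    (Pm2 : 'I_nm -> 'I_mX -> 'I_mZ -> 'I_oX -> 'I_oZ -> R) (Pm1 : 'I_nm -> 'I_mY -> 'I_oY -> R)
    (Pn2 : 'I_nn -> 'I_mY -> 'I_mZ -> 'I_oY -> 'I_oZ -> R) (Pn1 : 'I_nn -> 'I_mX -> 'I_oX -> R),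
    [/\ (forall l, 0 <= ql l), (forall k, 0 <= qm k), (forall k, 0 <= qn k) &
        \sum_l ql l + \sum_k qm k + \sum_k qn k = 1] /\
    [/\ (forall l, cond_dist2 (Pl2 l) /\ cond_dist1 (Pl1 l)),
        (forall k, cond_dist2 (Pm2 k) /\ cond_dist1 (Pm1 k)),
        (forall k, cond_dist2 (Pn2 k) /\ cond_dist1 (Pn1 k)) &
        forall X Y Z x y z,
          P X Y Z x y z =
            \sum_l ql l * Pl2 l X Y x y * Pl1 l Z z
          + \sum_k qm k * Pm2 k X Z x z * Pm1 k Y y
          + \sum_k qn k * Pn2 k Y Z y z * Pn1 k X x].

Definition genuinely_3nonlocal (rho : M3) : Prop :=
  exists (mX mY mZ oX oY oZ : nat)
    (E : 'I_mX -> 'I_oX -> 'M[C]_2) (F : 'I_mY -> 'I_oY -> 'M[C]_2)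
    (G : 'I_mZ -> 'I_oZ -> 'M[C]_2),
    [/\ qubit_povm E, qubit_povm F, qubit_povm G &
      ~ exists P : 'I_mX -> 'I_mY -> 'I_mZ -> 'I_oX -> 'I_oY -> 'I_oZ -> R,
          svetlichny_local P /\
          forall X Y Z x y z, qcorr rho E F G X Y Z x y z = (P X Y Z x y z)%:C].

Definition ket0bra0 : 'M[C]_2 := delta_mx 0 0.

End Quantum.

From HB Require Import structures.
From mathcomp Require Import all_boot all_order all_algebra.
From mathcomp Require Import reals.
From mathcomp.real_closed Require Import complex mxtens.
From mathcomp Require Import fingroup perm ring lra.
Import Order.TTheory GRing.Theory Num.Theory.
Local Open Scope complex_scope.
Local Open Scope ring_scope.
Set Implicit Arguments. Unset Strict Implicit. Unset Printing Implicit Defensive.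

(* The permutation swapping |100> and |111> is an incoherent unitary, and it maps
   rho ⊗ |0><0| ⊗ |0><0| to the GHZ-type state sum_ab rho_ab |aaa><bbb|.  Measure
   that state with equatorial spin observables: sigma_x and sigma_y on the last two
   qubits, and on the first qubit two directions rotated by the phase of rho_01.
   The Svetlichny operator then takes the value 4 sqrt 2 C_l1(rho).  A
   Svetlichny-local behaviour is a mixture of products of a two-party and a one-party
   distribution, and for each such product the operator is a combination
   f0 * CHSH + f1 * CHSH' with |f0|, |f1| <= 1, hence at most 4.  So
   C_l1(rho) > sqrt(1/2) gives a violation. *)

Definition o0 : 'I_2 := ord0.
Definition o1 : 'I_2 := ord_max.

Lemma ord2P (i : 'I_2) : i = o0 \/ i = o1.
Proof. by case: i => [[|[|//]]] Hi; [left | right]; apply: val_inj. Qed.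

Lemma sum_ord2 (V : nmodType) (F : 'I_2 -> V) : \sum_(i < 2) F i = F o0 + F o1.
Proof. by rewrite big_ord_recl big_ord1; congr (_ + F _); apply: val_inj. Qed.

Definition idx3 (a b c : 'I_2) : 'I_(2 * 2 * 2) := mxtens_index (mxtens_index (a, b), c).

Section Tensor.
Variable R : pzRingType.

Lemma tensmxDl m n p q (A1 A2 : 'M[R]_(m, n)) (B : 'M[R]_(p, q)) :
  (A1 + A2) *t B = A1 *t B + A2 *t B.
Proof.
apply/matrixP => ik jl; case: (mxtens_indexP ik) => i k; case: (mxtens_indexP jl) => j l.
by rewrite tensmxE [RHS]mxE !tensmxE mxE mulrDl.
Qed.

Lemma tensmx_suml m n p q I (r : seq I) (P : pred I) (A : I -> 'M[R]_(m, n))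
    (B : 'M[R]_(p, q)) :
  (\sum_(i <- r | P i) A i) *t B = \sum_(i <- r | P i) A i *t B.
Proof.
by apply: (big_morph (fun A : 'M_(m, n) => A *t B)) => [A1 A2|]; rewrite ?tensmxDl ?tens0mx.
Qed.

Lemma tensmxZl m n p q c (A : 'M[R]_(m, n)) (B : 'M[R]_(p, q)) :
  (c *: A) *t B = c *: (A *t B).
Proof.
apply/matrixP => ik jl; case: (mxtens_indexP ik) => i k; case: (mxtens_indexP jl) => j l.
by rewrite tensmxE [RHS]mxE !tensmxE mxE mulrA.
Qed.

Lemma tens_delta_mx m n p q (i : 'I_m) (j : 'I_n) (k : 'I_p) (l : 'I_q) :
  delta_mx i j *t delta_mx k l =
  delta_mx (mxtens_index (i, k)) (mxtens_index (j, l)) :> 'M[R]_(m * p, n * q).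
Proof.
apply/matrixP => ik jl; case: (mxtens_indexP ik) => i' k'; case: (mxtens_indexP jl) => j' l'.
rewrite tensmxE !mxE !(inj_eq (can_inj (@mxtens_indexK _ _))) !xpair_eqE.
by rewrite -natrM mulnb andbACA.
Qed.

Lemma mxtrace_delta_mul n (i j : 'I_n) (M : 'M[R]_n) : \tr (delta_mx i j *m M) = M j i.
Proof.
rewrite /mxtrace (bigD1 i) //= big1 ?addr0 => [|k /negbTE ki]; last first.
  by rewrite mxE big1 // => l _; rewrite mxE ki mul0r.
rewrite mxE (bigD1 j) //= big1 ?addr0 => [|l /negbTE lj]; last by rewrite mxE lj andbF mul0r.
by rewrite mxE !eqxx mul1r.
Qed.

Lemma tens3E (A B D : 'M[R]_2) a b c a' b' c' :
  ((A *t B) *t D) (idx3 a b c) (idx3 a' b' c') = A a a' * B b b' * D c c'.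
Proof. by rewrite /idx3 !tensmxE. Qed.

End Tensor.

Notation behaviour V := ('I_2 -> 'I_2 -> 'I_2 -> 'I_2 -> 'I_2 -> 'I_2 -> V).

Section Svetlichny.
Variable V : comPzRingType.

Definition svetlichny_sign (X Y Z : 'I_2) : V := if (X + Y + Z < 2)%N then 1 else -1.

Definition correlator (P : behaviour V) (X Y Z : 'I_2) : V :=
  \sum_(x < 2) \sum_(y < 2) \sum_(z < 2) (-1) ^+ (x + y + z) * P X Y Z x y z.

Definition svetlichny (P : behaviour V) : V :=
  \sum_(X < 2) \sum_(Y < 2) \sum_(Z < 2) svetlichny_sign X Y Z * correlator P X Y Z.

Lemma eq_svetlichny (P Q : behaviour V) :
  (forall X Y Z x y z, P X Y Z x y z = Q X Y Z x y z) -> svetlichny P = svetlichny Q.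
Proof.
move=> PQ; apply: eq_bigr => X _; apply: eq_bigr => Y _; apply: eq_bigr => Z _.
congr (_ * _); apply: eq_bigr => x _; apply: eq_bigr => y _; apply: eq_bigr => z _.
by rewrite PQ.
Qed.

Lemma svetlichny_const (d : V) : svetlichny (fun _ _ _ _ _ _ => d) = 0.
Proof.
have corr0 X Y Z : correlator (fun _ _ _ _ _ _ => d) X Y Z = 0.
  by rewrite /correlator !sum_ord2 /=; ring.
by rewrite /svetlichny !sum_ord2 !corr0; ring.
Qed.

Lemma svetlichnyD (P Q : behaviour V) :
  svetlichny (fun X Y Z x y z => P X Y Z x y z + Q X Y Z x y z) = svetlichny P + svetlichny Q.
Proof. rewrite /svetlichny /correlator !sum_ord2; ring. Qed.

Lemma svetlichnyZ c (P : behaviour V) :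
  svetlichny (fun X Y Z x y z => c * P X Y Z x y z) = c * svetlichny P.
Proof. rewrite /svetlichny /correlator !sum_ord2; ring. Qed.

Lemma svetlichny_sum n (c : 'I_n -> V) (P : 'I_n -> behaviour V) :
  svetlichny (fun X Y Z x y z => \sum_(l < n) c l * P l X Y Z x y z) =
  \sum_(l < n) c l * svetlichny (P l).
Proof.
elim: n c P => [|n IH] c P.
  rewrite big_ord0 -[RHS](svetlichny_const 0).
  by apply: eq_svetlichny => X Y Z x y z; rewrite big_ord0.
rewrite big_ord_recr /= -IH -svetlichnyZ -svetlichnyD.
by apply: eq_svetlichny => X Y Z x y z; rewrite big_ord_recr.
Qed.

Lemma svetlichny_swap12 (P : behaviour V) :
  svetlichny (fun X Y Z x y z => P Y X Z y x z) = svetlichny P.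
Proof. rewrite /svetlichny /correlator !sum_ord2 /svetlichny_sign /=; ring. Qed.

Lemma svetlichny_swap23 (P : behaviour V) :
  svetlichny (fun X Y Z x y z => P X Z Y x z y) = svetlichny P.
Proof. rewrite /svetlichny /correlator !sum_ord2 /svetlichny_sign /=; ring. Qed.

Definition svetlichny_form (f g h : 'I_2 -> V) : V :=
  \sum_(X < 2) \sum_(Y < 2) \sum_(Z < 2) svetlichny_sign X Y Z * (f X * g Y * h Z).

Lemma svetlichny_signed_product (f g h : 'I_2 -> V) :
  svetlichny (fun X Y Z x y z => (-1) ^+ (x + y + z) * (f X * g Y * h Z)) =
  8 * svetlichny_form f g h.
Proof.
have corr X Y Z : correlator (fun X Y Z x y z => (-1) ^+ (x + y + z) * (f X * g Y * h Z))
    X Y Z = 8 * (f X * g Y * h Z).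
  by rewrite /correlator !sum_ord2 /=; ring.
by rewrite /svetlichny /svetlichny_form !sum_ord2 !corr; ring.
Qed.

End Svetlichny.

Lemma rmorph_svetlichny (V W : comPzRingType) (f : {rmorphism V -> W}) (P : behaviour V) :
  f (svetlichny P) = svetlichny (fun X Y Z x y z => f (P X Y Z x y z)).
Proof.
rewrite /svetlichny; do 3 (rewrite rmorph_sum; apply: eq_bigr => ? _).
rewrite rmorphM /correlator; congr (_ * _).
  by rewrite /svetlichny_sign; case: ifP => _; rewrite ?rmorphN1 ?rmorph1.
do 3 (rewrite rmorph_sum; apply: eq_bigr => ? _).
by rewrite rmorphM rmorphXn rmorphN1.
Qed.

Section SvetlichnyLocal.
Variable R : realType.

Definition correlator2 (P : 'I_2 -> 'I_2 -> 'I_2 -> 'I_2 -> R) (a b : 'I_2) : R :=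
  \sum_(x < 2) \sum_(y < 2) (-1) ^+ (x + y) * P a b x y.

Definition correlator1 (P : 'I_2 -> 'I_2 -> R) (a : 'I_2) : R :=
  \sum_(x < 2) (-1) ^+ x * P a x.

Lemma correlator2_bound P a b : cond_dist2 P -> -1 <= correlator2 P a b <= 1.
Proof.
move=> /(_ a b) [P_ge0]; rewrite /correlator2 !sum_ord2 /= => P_sum.
have := P_ge0 o0 o0; have := P_ge0 o0 o1; have := P_ge0 o1 o0; have := P_ge0 o1 o1.
by move=> *; apply/andP; split; lra.
Qed.

Lemma correlator1_bound P a : cond_dist1 P -> -1 <= correlator1 P a <= 1.
Proof.
move=> /(_ a) [P_ge0]; rewrite /correlator1 !sum_ord2 /= => P_sum.
have := P_ge0 o0; have := P_ge0 o1.
by move=> *; apply/andP; split; lra.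
Qed.

Lemma chsh_combination_le4 (e00 e01 e10 e11 f0 f1 : R) :
  -1 <= e00 <= 1 -> -1 <= e01 <= 1 -> -1 <= e10 <= 1 -> -1 <= e11 <= 1 ->
  -1 <= f0 <= 1 -> -1 <= f1 <= 1 ->
  f0 * (e00 + e01 + e10 - e11) + f1 * (e00 - e01 - e10 - e11) <= 4.
Proof.
move=> /andP[? ?] /andP[? ?] /andP[? ?] /andP[? ?] /andP[? ?] /andP[? ?].
have [|] := lerP 0 (e00 + e01 + e10 - e11); have [|] := lerP 0 (e00 - e01 - e10 - e11);
  move=> *; nra.
Qed.

Lemma svetlichny_split_le4 (P2 : 'I_2 -> 'I_2 -> 'I_2 -> 'I_2 -> R) (P1 : 'I_2 -> 'I_2 -> R) :
  cond_dist2 P2 -> cond_dist1 P1 ->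
  svetlichny (fun X Y Z x y z => P2 X Y x y * P1 Z z) <= 4.
Proof.
move=> /correlator2_bound P2_bound /correlator1_bound P1_bound.
pose E := correlator2 P2; pose F := correlator1 P1.
have -> : svetlichny (fun X Y Z x y z => P2 X Y x y * P1 Z z) =
    F o0 * (E o0 o0 + E o0 o1 + E o1 o0 - E o1 o1) +
    F o1 * (E o0 o0 - E o0 o1 - E o1 o0 - E o1 o1).
  rewrite /svetlichny /correlator /E /F /correlator1 /correlator2 !sum_ord2.
  by rewrite /svetlichny_sign /=; ring.
exact: chsh_combination_le4.
Qed.

Lemma svetlichny_local_le4 (P : behaviour R) : svetlichny_local P -> svetlichny P <= 4.
Proof.
case=> nl [nm [nn [ql [qm [qn [Pl2 [Pl1 [Pm2 [Pm1 [Pn2 [Pn1 []]]]]]]]]]]].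
case=> ql_ge0 qm_ge0 qn_ge0 q_sum [l_dist m_dist n_dist P_def].
have -> : svetlichny P =
    \sum_l ql l * svetlichny (fun X Y Z x y z => Pl2 l X Y x y * Pl1 l Z z) +
    \sum_k qm k * svetlichny (fun X Y Z x y z => Pm2 k X Z x z * Pm1 k Y y) +
    \sum_k qn k * svetlichny (fun X Y Z x y z => Pn2 k Y Z y z * Pn1 k X x).
  rewrite -!svetlichny_sum -!svetlichnyD; apply: eq_svetlichny => X Y Z x y z.
  by rewrite P_def; congr (_ + _ + _); apply: eq_bigr => l _; rewrite mulrA.
apply: (@le_trans _ _ ((\sum_l ql l + \sum_k qm k + \sum_k qn k) * 4));
  last by rewrite q_sum mul1r.
rewrite !mulrDl !mulr_suml.
apply: lerD; first apply: lerD; apply: ler_sum => l _; apply: ler_wpM2l => //.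
- by case: (l_dist l) => *; apply: svetlichny_split_le4.
- by case: (m_dist l) => *; rewrite -svetlichny_swap23; apply: svetlichny_split_le4.
- case: (n_dist l) => *; rewrite -svetlichny_swap12 -svetlichny_swap23.
  exact: svetlichny_split_le4.
Qed.

End SvetlichnyLocal.

Section Quantum.
Variable R : realType.
Local Notation C := (complex R).

Lemma adjmx_perm_mx n (s : 'S_n) : adjmx (perm_mx s : 'M[C]_n) = perm_mx s^-1.
Proof.
rewrite /adjmx -tr_perm_mx; congr _^T; apply/matrixP => i j; rewrite !mxE.
exact: conjc_nat.
Qed.

Lemma perm_conj_mxE n (s : 'S_n) (A : 'M[C]_n) i j :
  (perm_mx s *m A *m adjmx (perm_mx s)) i j = A (s i) (s j).
Proof. by rewrite adjmx_perm_mx -col_permE -row_permE !mxE. Qed.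

Lemma perm_conj_delta n (s : 'S_n) (i j : 'I_n) :
  perm_mx s *m delta_mx i j *m adjmx (perm_mx s) =
  delta_mx ((s^-1)%g i) ((s^-1)%g j) :> 'M[C]_n.
Proof.
by apply/matrixP => k l; rewrite perm_conj_mxE !mxE !(canF_eq (permK s)).
Qed.

Lemma perm_incoherent n (s : 'S_n) : incoherent_op [:: perm_mx s : 'M[C]_n].
Proof.
split; first by rewrite /kraus_tp big_seq1 adjmx_perm_mx -perm_mxM mulVg perm_mx1.
move=> K; rewrite inE => /eqP -> rho _ /is_diag_mxP rho_diag.
apply/is_diag_mxP => i j ij; rewrite perm_conj_mxE rho_diag //.
by move: ij; rewrite !(inj_eq val_inj) (inj_eq perm_inj).
Qed.

Definition ghz (a : 'I_2) : 'I_(2 * 2 * 2) := idx3 a a a.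

Definition ghz_state (rho : 'M[C]_2) : 'M[C]_(2 * 2 * 2) :=
  \sum_a \sum_b rho a b *: delta_mx (ghz a) (ghz b).

Definition ghz_swap : 'S_(2 * 2 * 2) := tperm (idx3 o1 o0 o0) (idx3 o1 o1 o1).

Lemma ghz_swap_ket0 a : (ghz_swap^-1)%g (idx3 a o0 o0) = ghz a.
Proof. by rewrite tpermV; case: (ord2P a) => ->; rewrite ?tpermL // tpermD. Qed.

Lemma tens_ket0bra0 (rho : 'M[C]_2) :
  (rho *t ket0bra0 R) *t ket0bra0 R =
  \sum_a \sum_b rho a b *: delta_mx (idx3 a o0 o0) (idx3 b o0 o0).
Proof.
rewrite {1}[rho]matrix_sum_delta !tensmx_suml; apply: eq_bigr => a _.
rewrite !tensmx_suml; apply: eq_bigr => b _.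
by rewrite !tensmxZl !tens_delta_mx.
Qed.

Lemma ghz_swapE (rho : 'M[C]_2) :
  perm_mx ghz_swap *m ((rho *t ket0bra0 R) *t ket0bra0 R) *m adjmx (perm_mx ghz_swap) =
  ghz_state rho.
Proof.
rewrite tens_ket0bra0 mulmx_sumr mulmx_suml; apply: eq_bigr => a _.
rewrite mulmx_sumr mulmx_suml; apply: eq_bigr => b _.
by rewrite -scalemxAr -scalemxAl perm_conj_delta !ghz_swap_ket0.
Qed.

Lemma mxtrace_ghz_tens (rho A B D : 'M[C]_2) :
  \tr (ghz_state rho *m ((A *t B) *t D)) =
  \sum_a \sum_b rho a b * (A b a * B b a * D b a).
Proof.
rewrite mulmx_suml raddf_sum /=; apply: eq_bigr => a _.
rewrite mulmx_suml raddf_sum /=; apply: eq_bigr => b _.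
by rewrite -scalemxAl mxtraceZ mxtrace_delta_mul tens3E.
Qed.

(* The two outcomes of the spin measurement along the equatorial Bloch vector
   (Re w, Im w, 0): w = 1 measures sigma_x and w = 'i measures sigma_y. *)
Definition eq_proj (w : C) (x : 'I_2) : 'M[C]_2 :=
  \matrix_(i, j) if i == j then 2^-1 else (-1) ^+ x * (if i == o0 then w^* else w) / 2.

Lemma eq_projE w x :
  (eq_proj w x o0 o0 = 2^-1) * (eq_proj w x o1 o1 = 2^-1) *
  (eq_proj w x o0 o1 = (-1) ^+ x * w^* / 2) * (eq_proj w x o1 o0 = (-1) ^+ x * w / 2).
Proof. by rewrite !mxE. Qed.

Lemma sum_eq_proj w : \sum_(x < 2) eq_proj w x = 1%:M.
Proof.
apply/matrixP => i j; rewrite summxE sum_ord2 !mxE.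
by case: (ord2P i) => ->; case: (ord2P j) => -> /=; rewrite ?mulr1n ?mulr0n; field.
Qed.

Lemma quad_form2 (A : 'M[C]_2) (v : 'cV[C]_2) : (adjmx v *m A *m v) 0 0 =
  (v o0 0)^* * A o0 o0 * v o0 0 + (v o0 0)^* * A o0 o1 * v o1 0 +
  (v o1 0)^* * A o1 o0 * v o0 0 + (v o1 0)^* * A o1 o1 * v o1 0.
Proof. by rewrite !mxE !sum_ord2 !mxE !sum_ord2 !mxE; ring. Qed.

Lemma eq_proj_psd w x : `|w| <= 1 -> psdmx (eq_proj w x).
Proof.
case: w => wr wi w_le1 v.
have w_sqr_le1 : wr ^+ 2 + wi ^+ 2 <= 1.
  move: w_le1; rewrite -(expr_le1 (n := 2)) // normCK; simpc.
  by rewrite -!expr2 => /andP[].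
have inv2 : (2 : C)^-1 = (2^-1 : R) +i* 0 by rewrite complexr0 fmorphV rmorph_nat.
rewrite quad_form2 !eq_projE inv2.
case: (v o0 0) => p q; case: (v o1 0) => r s.
have h1 : 0 <= (1 - wr ^+ 2 - wi ^+ 2) * (r ^+ 2 + s ^+ 2).
  by apply: mulr_ge0; [lra | apply: addr_ge0; apply: sqr_ge0].
case: (ord2P x) => -> /=; rewrite ?expr0 ?expr1 ?mulN1r ?mul1r;
rewrite -![(_ +i* _)^*]/(_ +i* _); simpc; apply/andP; split;
  try (apply/eqP; ring).
- have h2 : 0 <= (p + (wr * r + wi * s)) ^+ 2 + (q + (wr * s - wi * r)) ^+ 2.
    by apply: addr_ge0; apply: sqr_ge0.
  nra.
- have h2 : 0 <= (p - (wr * r + wi * s)) ^+ 2 + (q - (wr * s - wi * r)) ^+ 2.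
    by apply: addr_ge0; apply: sqr_ge0.
  nra.
Qed.

Lemma eq_proj_povm (w : 'I_2 -> C) : (forall s, `|w s| <= 1) ->
  qubit_povm (fun s => eq_proj (w s)).
Proof. by move=> w_le1 s; split=> [x|]; [exact: eq_proj_psd | exact: sum_eq_proj]. Qed.

Lemma qcorr_ghz_eq_proj (rho : 'M[C]_2) (w v v' : 'I_2 -> C) X Y Z x y z :
  qcorr (ghz_state rho) (fun s => eq_proj (w s)) (fun s => eq_proj (v s))
    (fun s => eq_proj (v' s)) X Y Z x y z =
  8^-1 * (rho o0 o0 + rho o1 o1) +
  8^-1 * rho o0 o1 * ((-1) ^+ (x + y + z) * (w X * v Y * v' Z)) +
  8^-1 * rho o1 o0 * ((-1) ^+ (x + y + z) * ((w X)^* * (v Y)^* * (v' Z)^*)).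
Proof. by rewrite /qcorr mxtrace_ghz_tens !sum_ord2 !eq_projE !exprD; field. Qed.

Lemma svetlichny_ghz_eq_proj (rho : 'M[C]_2) (w v v' : 'I_2 -> C) :
  svetlichny (qcorr (ghz_state rho) (fun s => eq_proj (w s)) (fun s => eq_proj (v s))
    (fun s => eq_proj (v' s))) =
  rho o0 o1 * svetlichny_form w v v' +
  rho o1 o0 * svetlichny_form (fun s => (w s)^*) (fun s => (v s)^*) (fun s => (v' s)^*).
Proof.
rewrite (eq_svetlichny (qcorr_ghz_eq_proj rho w v v')) !svetlichnyD !svetlichnyZ.
by rewrite svetlichny_const !svetlichny_signed_product; field.
Qed.

Lemma psd_hermitian2 (rho : 'M[C]_2) : psdmx rho -> rho o1 o0 = (rho o0 o1)^*.
Proof.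
pose vec2 (v0 v1 : C) : 'cV[C]_2 := \col_i (if i == o0 then v0 else v1).
move=> rho_psd; have := rho_psd (vec2 1 0); have := rho_psd (vec2 0 1).
have := rho_psd (vec2 1 1); have := rho_psd (vec2 1 'i).
rewrite !quad_form2 !mxE /=.
move: (rho o0 o0) (rho o0 o1) (rho o1 o0) (rho o1 o1) => [a b] [c d] [e f] [g h].
rewrite -![(_ +i* _)^*]/(_ +i* _); simpc.
move=> /andP[/eqP h1 _] /andP[/eqP h2 _] /andP[/eqP h3 _] /andP[/eqP h4 _].
by congr (_ +i* _); lra.
Qed.

Lemma coh_l1_qubit (rho : 'M[C]_2) : coh_l1 rho = `|rho o0 o1| + `|rho o1 o0|.
Proof.
by rewrite /coh_l1 sum_ord2 big_mkcond sum_ord2 /= big_mkcond sum_ord2 /= add0r addr0.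
Qed.

Definition xy_dir (s : 'I_2) : C := if s == o0 then 1 else 'i.

(* The factor a^* / |a| cancels the phase of rho_01 = a; what remains,
   (1 -+ 'i) / sqrt 2, are the optimal first-qubit directions for a GHZ-type state
   with positive coherence. *)
Definition opt_dir (a : C) (s : 'I_2) : C :=
  a^* / `|a| * (Num.sqrt (1 / 2 : R))%:C * (if s == o0 then 1 - 'i else 1 + 'i).

Lemma norm_xy_dir s : `|xy_dir s| = 1.
Proof. by rewrite /xy_dir; case: (ord2P s) => -> /=; rewrite ?normr1 ?normCi. Qed.

Lemma sqrt_half_real : (Num.sqrt (1 / 2 : R))%:C^* = (Num.sqrt (1 / 2 : R))%:C.
Proof. by apply: conj_Creal; apply: ger0_real; rewrite lecR sqrtr_ge0. Qed.

Lemma sqrt_half_sqr : 2 * (Num.sqrt (1 / 2 : R))%:C ^+ 2 = 1.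
Proof.
rewrite -rmorphXn sqr_sqrtr ?divr_ge0 ?ler01 ?ler0n //.
by rewrite rmorphM fmorphV rmorph1 rmorph_nat; field.
Qed.

Lemma four_lt_eight_sqrt_half_mul (c : C) :
  (Num.sqrt (1 / 2 : R))%:C < c -> 4 < 8 * (Num.sqrt (1 / 2 : R))%:C * c.
Proof.
have s_gt0 : 0 < (Num.sqrt (1 / 2 : R))%:C by rewrite ltcR sqrtr_gt0 divr_gt0 ?ltr01 ?ltr0n.
have -> : 4 = 8 * (Num.sqrt (1 / 2 : R))%:C * (Num.sqrt (1 / 2 : R))%:C.
  by rewrite -[4](mulr1) -[in X in _ * X]sqrt_half_sqr; ring.
by rewrite ltr_pM2l // mulr_gt0 ?ltr0n.
Qed.

Lemma norm_opt_dir a s : a != 0 -> `|opt_dir a s| = 1.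
Proof.
move=> a0; apply/eqP; rewrite -sqrp_eq1 // normCK /opt_dir.
rewrite !rmorphM fmorphV /= conjCK conj_normC sqrt_half_real.
have i2 : 'i ^+ 2 = -1 :> C := sqrCi _.
have na0 : `|a| != 0 by rewrite normr_eq0.
by case: (ord2P s) => -> /=; rewrite ?(rmorphB, rmorphD) /= rmorph1 conjCi; apply/eqP;
  field: (esym (normCK a)) sqrt_half_sqr i2.
Qed.

Lemma svetlichny_ghz_opt (rho : 'M[C]_2) :
  rho o1 o0 = (rho o0 o1)^* -> rho o0 o1 != 0 ->
  svetlichny (qcorr (ghz_state rho) (fun s => eq_proj (opt_dir (rho o0 o1) s))
    (fun s => eq_proj (xy_dir s)) (fun s => eq_proj (xy_dir s))) =
  8 * (Num.sqrt (1 / 2 : R))%:C * coh_l1 rho.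
Proof.
move=> rho10 a0; rewrite svetlichny_ghz_eq_proj coh_l1_qubit rho10 norm_conjC.
have i2 : 'i ^+ 2 = -1 :> C := sqrCi _.
have na0 : `|rho o0 o1| != 0 by rewrite normr_eq0.
rewrite /svetlichny_form !sum_ord2 /svetlichny_sign /opt_dir /xy_dir /=.
rewrite !rmorphM !fmorphV !rmorphB !rmorphD /=.
rewrite conjCK conj_normC sqrt_half_real conjCi conjC1.
by field: (esym (normCK (rho o0 o1))) i2.
Qed.

End Quantum.

Theorem theorem5 (R : realType) (rho : 'M[complex R]_2) :
  density rho ->
  ((Num.sqrt (1 / 2 : R))%:C < coh_l1 rho)%R ->
  exists Ks : seq 'M[complex R]_(2 * 2 * 2),
    incoherent_op Ks /\
    genuinely_3nonlocal (kraus_apply Ks ((rho *t ket0bra0 R) *t ket0bra0 R)).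
Proof.
move=> [rho_psd _] coh_gt.
have rho10 := psd_hermitian2 rho_psd.
have a0 : rho o0 o1 != 0.
  apply: contraTneq coh_gt => a0; rewrite coh_l1_qubit rho10 a0 conjC0 normr0 addr0.
  by rewrite ltcE /= ltNge sqrtr_ge0 andbF.
exists [:: perm_mx ghz_swap]; split; first exact: perm_incoherent.
rewrite /kraus_apply big_seq1 ghz_swapE.
exists 2, 2, 2, 2, 2, 2, (fun s => eq_proj (opt_dir (rho o0 o1) s)),
  (fun s => eq_proj (xy_dir R s)), (fun s => eq_proj (xy_dir R s)).
split; try by apply: eq_proj_povm => s; rewrite ?norm_opt_dir ?norm_xy_dir.
case=> P [/svetlichny_local_le4 P_le4 P_qcorr].
have := four_lt_eight_sqrt_half_mul coh_gt.
rewrite -svetlichny_ghz_opt // (eq_svetlichny P_qcorr) -rmorph_svetlichny.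
by rewrite -(rmorph_nat (real_complex R) 4) ltcR ltNge P_le4.
Qed.
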